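(* Let $V$ be a finite dimensional normed vector space and $H\le O(V)$. Let $L_i:H\to\mathbb{R}$ be group-norms such that $d_i(u,v)=\inf_{a\in H}\sqrt{L_i(a)^2+\|au-v\|^2}$ converge uniformly on compact sets to a semi-metric $d_\infty$ on $V$. Then $$G=\{g\in O(V):\ d_\infty(u,gu)=0 \text{ for all } u\in V\}$$ is a closed subgroup of $O(V)$, and for $u,v\in V$, $d_\infty(u,v)=0$ if and only if $v=gu$ for some $g\in G$.
   Context: $O(V)$ is the group of norm-preserving linear maps of $V$. A group-norm on $H$ is $L:H\to\mathbb{R}$ with $L(a)\ge0$, $L(a)=0$ iff $a=e$, $L(a^{-1})=L(a)$, $L(ab)\le L(a)+L(b)$. $G$ is called the wane group. *)

From Stdlib Require Fin.
From Stdlib Require Import Reals List.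
Open Scope R_scope.

(* V is modelled as R^n = (Fin.t n -> R) equipped with an arbitrary norm N.
   Every n-dimensional real normed space is isometric to such an (R^n, N). *)
Definition vec (n : nat) := Fin.t n -> R.

Definition vadd {n} (u v : vec n) : vec n := fun i => u i + v i.
Definition vopp {n} (u : vec n) : vec n := fun i => - u i.
Definition vsub {n} (u v : vec n) : vec n := fun i => u i - v i.
Definition vscale {n} (c : R) (u : vec n) : vec n := fun i => c * u i.
Definition vzero {n} : vec n := fun _ => 0.

Definition is_norm {n} (N : vec n -> R) : Prop :=
  (forall u, 0 <= N u) /\
  (forall u, N u = 0 -> u = vzero) /\
  (forall c u, N (vscale c u) = Rabs c * N u) /\
  (forall u v, N (vadd u v) <= N u + N v).

Definition is_linear {n} (f : vec n -> vec n) : Prop :=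
  (forall u v, f (vadd u v) = vadd (f u) (f v)) /\
  (forall c u, f (vscale c u) = vscale c (f u)).

Definition in_O {n} (N : vec n -> R) (f : vec n -> vec n) : Prop :=
  is_linear f /\ forall u, N (f u) = N u.

Definition id_map {n} (f : vec n -> vec n) : Prop := forall u, f u = u.

Definition inverse_maps {n} (g h : vec n -> vec n) : Prop :=
  (forall u, g (h u) = u) /\ (forall u, h (g u) = u).

Definition is_subgroup_O {n} (N : vec n -> R) (H : (vec n -> vec n) -> Prop) : Prop :=
  (forall a, H a -> in_O N a) /\
  H (fun u => u) /\
  (forall a b, H a -> H b -> H (fun u => a (b u))) /\
  (forall a, H a -> exists b, H b /\ inverse_maps a b).

Definition is_group_norm {n} (H : (vec n -> vec n) -> Prop)
    (L : (vec n -> vec n) -> R) : Prop :=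
  (forall a, H a -> 0 <= L a) /\
  (forall a, H a -> (L a = 0 <-> id_map a)) /\
  (forall a b, H a -> H b -> inverse_maps a b -> L b = L a) /\
  (forall a b, H a -> H b -> L (fun u => a (b u)) <= L a + L b).

Definition is_infimum (S : R -> Prop) (m : R) : Prop :=
  (forall x, S x -> m <= x) /\
  (forall m', (forall x, S x -> m' <= x) -> m' <= m).

Definition is_semimetric {n} (d : vec n -> vec n -> R) : Prop :=
  (forall u v, 0 <= d u v) /\
  (forall u, d u u = 0) /\
  (forall u v, d u v = d v u) /\
  (forall u v w, d u w <= d u v + d v w).

Definition open_VV {n} (N : vec n -> R) (U : vec n -> vec n -> Prop) : Prop :=
  forall u v, U u v -> exists r, 0 < r /\
    forall u' v', N (vsub u' u) < r -> N (vsub v' v) < r -> U u' v'.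

Definition compact_VV {n} (N : vec n -> R) (K : vec n -> vec n -> Prop) : Prop :=
  forall (I : Type) (U : I -> vec n -> vec n -> Prop),
    (forall i, open_VV N (U i)) ->
    (forall u v, K u v -> exists i, U i u v) ->
    exists l : list I, forall u v, K u v -> exists i, In i l /\ U i u v.

Definition unif_cv_compact {n} (N : vec n -> R)
    (d : nat -> vec n -> vec n -> R) (dl : vec n -> vec n -> R) : Prop :=
  forall K, compact_VV N K ->
    forall eps, 0 < eps -> exists i0 : nat, forall i, (i0 <= i)%nat ->
      forall u v, K u v -> Rabs (d i u v - dl u v) < eps.

(* If d_oo(u, v) = 0, pick a_i in H almost realising d_i(u, v): then L_i(a_i) -> 0 and
   a_i u -> v.  Since O(V) is sequentially compact, a subsequence of (a_i) converges
   pointwise to some g in O(V), and d_oo(w, g w) <= lim (L_i(a_i) + |a_i w - g w|) = 0, so g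
   lies in G and maps u to v.  Taking a = id gives d_oo(u, v) <= |u - v|, which with the
   triangle inequality makes G a closed monoid.  It is closed under inverses because an
   isometry g of a finite-dimensional space is invertible: if g^(p_m) converges then
   g^(p_(m+1) - p_m) -> id, and a limit point of g^(p_(m+1) - p_m - 1) inverts g. *)

From Coquelicot Require Import Rcomplements Hierarchy Lim_seq.
From Stdlib Require Import Reals Lra Lia List Classical ClassicalEpsilon FunctionalExtensionality.
Open Scope R_scope.

Lemma increasing_lt (phi : nat -> nat) :
  (forall m, (phi m < phi (S m))%nat) -> forall m k, (m < k)%nat -> (phi m < phi k)%nat.
Proof. intros Hphi m k Hmk; induction Hmk as [|k Hmk IH]; [apply Hphi | specialize (Hphi k); lia]. Qed.

Lemma increasing_comp (phi psi : nat -> nat) :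
  (forall m, (phi m < phi (S m))%nat) -> (forall m, (psi m < psi (S m))%nat) ->
  forall m, (phi (psi m) < phi (psi (S m)))%nat.
Proof. intros Hphi Hpsi m; exact (increasing_lt phi Hphi _ _ (Hpsi m)). Qed.

Lemma eventually_comp_subseq (phi : nat -> nat) (P : nat -> Prop) :
  (forall m, (phi m < phi (S m))%nat) -> eventually P -> eventually (fun m => P (phi m)).
Proof. intros Hphi; exact (eventually_subseq phi Hphi P). Qed.

Lemma Un_cv_subseq (u : nat -> R) (l : R) (phi : nat -> nat) :
  (forall m, (phi m < phi (S m))%nat) -> Un_cv u l -> Un_cv (fun m => u (phi m)) l.
Proof. intros Hphi Hu eps Heps; exact (eventually_comp_subseq phi _ Hphi (Hu eps Heps)). Qed.

Lemma eventually_inv_succ_lt (eps : R) : 0 < eps -> eventually (fun k => / INR (S k) < eps).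
Proof.
  intros Heps; destruct (archimed_cor1 eps Heps) as [M [HM HM0]].
  exists M; intros k Hk; eapply Rle_lt_trans; [|exact HM].
  apply Rinv_le_contravar; [apply lt_0_INR; lia | apply le_INR; lia].
Qed.

Lemma ValAdh_subseq (u : nat -> R) (l : R) : ValAdh u l ->
  exists phi, (forall m, (phi m < phi (S m))%nat) /\ Un_cv (fun m => u (phi m)) l.
Proof.
  intros Hl.
  assert (Hnext : forall kp : nat * nat, exists q,
             (snd kp < q)%nat /\ Rabs (u q - l) < / INR (S (fst kp))).
  { intros [k p].
    assert (Hpos : 0 < / INR (S k)) by (apply Rinv_0_lt_compat, lt_0_INR; lia).
    destruct (Hl (disc l (mkposreal _ Hpos)) (S p)) as [q [Hq Hd]].
    - exists (mkposreal _ Hpos); intros x Hx; exact Hx.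
    - exists q; split; [simpl; lia | exact Hd]. }
  destruct (choice _ Hnext) as [f Hf].
  exists (fix phi k := match k with O => f (O, O) | S k => f (S k, phi k) end).
  split; [intro m; exact (proj1 (Hf (S m, _)))|].
  intros eps Heps; destruct (eventually_inv_succ_lt eps Heps) as [M HM].
  exists M; intros k Hk; eapply Rlt_trans; [|exact (HM k Hk)].
  destruct k; exact (proj2 (Hf _)).
Qed.

Lemma bounded_subseq_cv (u : nat -> R) (B : R) : (forall m, Rabs (u m) <= B) ->
  exists phi, (forall m, (phi m < phi (S m))%nat) /\ exists l, Un_cv (fun m => u (phi m)) l.
Proof.
  intros Hb.
  destruct (Bolzano_Weierstrass u _ (compact_P3 (- B) B)) as [l Hl].
  { intro m; apply Rabs_le_between, Hb. }
  destruct (ValAdh_subseq u l Hl) as [phi [Hphi Hcv]]; eauto.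
Qed.

Lemma bounded_family_subseq_cv {A : Type} (l : list A) (s : A -> nat -> R) :
  (forall a, In a l -> exists B, forall m, Rabs (s a m) <= B) ->
  exists phi, (forall m, (phi m < phi (S m))%nat) /\
    forall a, In a l -> exists L, Un_cv (fun m => s a (phi m)) L.
Proof.
  induction l as [|a l IH]; intros Hb.
  - exists (fun m => m); split; [intro; lia | intros a []].
  - destruct IH as [phi [Hphi Hcv]]; [intros b Hb'; apply Hb; right; exact Hb'|].
    destruct (Hb a (or_introl eq_refl)) as [B HB].
    destruct (bounded_subseq_cv (fun m => s a (phi m)) B (fun m => HB _))
      as [psi [Hpsi [La HLa]]].
    exists (fun m => phi (psi m)); split; [exact (increasing_comp phi psi Hphi Hpsi)|].
    intros b [<-|Hb']; [exists La; exact HLa|].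
    destruct (Hcv b Hb') as [Lb HLb].
    exists Lb; exact (Un_cv_subseq (fun m => s b (phi m)) Lb psi Hpsi HLb).
Qed.

Lemma Un_cv_const (c : R) : Un_cv (fun _ => c) c.
Proof. intros eps Heps; exists O; intros; unfold R_dist; rewrite Rminus_diag, Rabs_R0; exact Heps. Qed.

Lemma Un_cv_ext (u v : nat -> R) (l : R) : (forall m, u m = v m) -> Un_cv u l -> Un_cv v l.
Proof. intros Huv; replace v with u by (apply functional_extensionality, Huv); auto. Qed.

Fixpoint lsum {A : Type} (l : list A) (f : A -> R) : R :=
  match l with nil => 0 | a :: l => f a + lsum l f end.

Lemma lsum_le {A : Type} (l : list A) (f g : A -> R) :
  (forall a, f a <= g a) -> lsum l f <= lsum l g.
Proof. intros Hfg; induction l; simpl; [lra | specialize (Hfg a); lra]. Qed.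

Lemma lsum_zero {A : Type} (l : list A) : lsum l (fun _ => 0) = 0.
Proof. induction l; simpl; [|rewrite IHl]; ring. Qed.

Lemma lsum_nonneg {A : Type} (l : list A) (f : A -> R) :
  (forall a, 0 <= f a) -> 0 <= lsum l f.
Proof. intros Hf; rewrite <- (lsum_zero l); apply lsum_le, Hf. Qed.

Lemma lsum_ge_term {A : Type} (l : list A) (f : A -> R) (a : A) :
  (forall b, 0 <= f b) -> In a l -> f a <= lsum l f.
Proof.
  intros Hf; induction l as [|b l IH]; simpl; [tauto|].
  intros [<-|Ha]; [pose proof (lsum_nonneg l f Hf) | specialize (IH Ha); pose proof (Hf b)]; lra.
Qed.

Lemma lsum_scal {A : Type} (l : list A) (c : R) (f : A -> R) :
  lsum l (fun a => c * f a) = c * lsum l f.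
Proof. induction l; simpl; [|rewrite IHl]; ring. Qed.

Lemma Un_cv_lsum {A : Type} (l : list A) (f : A -> nat -> R) (F : A -> R) :
  (forall a, In a l -> Un_cv (f a) (F a)) ->
  Un_cv (fun m => lsum l (fun a => f a m)) (lsum l F).
Proof.
  induction l as [|a l IH]; intros Hf; simpl.
  - apply Un_cv_const.
  - apply CV_plus; [apply Hf; left; reflexivity | apply IH; intros b Hb; apply Hf; right; exact Hb].
Qed.

Lemma Un_cv_0_eventually_lt (u : nat -> R) : Un_cv u 0 ->
  forall eps, 0 < eps -> eventually (fun m => u m < eps).
Proof.
  intros Hu eps Heps; apply (filter_imp _ _ (fun m Hm => Rle_lt_trans _ _ _ (Rle_abs _) Hm)).
  destruct (Hu eps Heps) as [M HM]; exists M; intros m Hm.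
  specialize (HM m Hm); unfold R_dist in HM; rewrite Rminus_0_r in HM; exact HM.
Qed.

Lemma Rle_eps_eq0 (x : R) : 0 <= x -> (forall eps, 0 < eps -> x <= eps) -> x = 0.
Proof.
  intros Hx Heps; apply Rle_antisym; [|exact Hx].
  apply le_epsilon; intros eps He; rewrite Rplus_0_l; exact (Heps eps He).
Qed.

Ltac vec_ring := apply functional_extensionality; intro;
  unfold vadd, vsub, vopp, vscale, vzero; ring.

Fixpoint fin_enum (n : nat) : list (Fin.t n) :=
  match n with O => nil | S n => Fin.F1 :: map Fin.FS (fin_enum n) end.

Lemma fin_enum_complete (n : nat) (i : Fin.t n) : In i (fin_enum n).
Proof. induction i; simpl; [left; reflexivity | right; apply in_map, IHi]. Qed.

Section Coordinates.
Variable n : nat.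

Definition basis (k : Fin.t n) : vec n := fun i => if Fin.eq_dec k i then 1 else 0.

Definition zero_coord (k : Fin.t n) (u : vec n) : vec n :=
  fun i => if Fin.eq_dec k i then 0 else u i.

Definition supported_on (l : list (Fin.t n)) (u : vec n) : Prop :=
  forall i, ~ In i l -> u i = 0.

Lemma vec_split_coord (k : Fin.t n) (u : vec n) :
  u = vadd (vscale (u k) (basis k)) (zero_coord k u).
Proof.
  apply functional_extensionality; intro i; unfold vadd, vscale, basis, zero_coord.
  destruct (Fin.eq_dec k i); [subst|]; ring.
Qed.

Lemma supported_on_nil (u : vec n) : supported_on nil u -> u = vzero.
Proof. intros Hu; apply functional_extensionality; intro i; apply Hu; simpl; tauto. Qed.

Lemma supported_on_cons (k : Fin.t n) (l : list (Fin.t n)) (u : vec n) :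
  supported_on (k :: l) u -> supported_on l (zero_coord k u).
Proof.
  intros Hu i Hi; unfold zero_coord; destruct (Fin.eq_dec k i); [reflexivity|].
  apply Hu; simpl; tauto.
Qed.

Lemma supported_on_fin_enum (u : vec n) : supported_on (fin_enum n) u.
Proof. intros i Hi; contradiction (Hi (fin_enum_complete n i)). Qed.

Definition l1norm (u : vec n) : R := lsum (fin_enum n) (fun k => Rabs (u k)).

Lemma coord_le_l1norm (u : vec n) (k : Fin.t n) : Rabs (u k) <= l1norm u.
Proof.
  apply (lsum_ge_term _ (fun k => Rabs (u k))); [intro; apply Rabs_pos | apply fin_enum_complete].
Qed.

Lemma l1norm_scal (c : R) (u : vec n) : l1norm (vscale c u) = Rabs c * l1norm u.
Proof.
  unfold l1norm, vscale; rewrite <- lsum_scal; apply f_equal, functional_extensionality.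
  intro k; apply Rabs_mult.
Qed.

Lemma l1norm_vzero : l1norm vzero = 0.
Proof. unfold l1norm, vzero; rewrite Rabs_R0; apply lsum_zero. Qed.

Lemma Un_cv_l1norm (x : nat -> vec n) (y : vec n) :
  (forall k, Un_cv (fun m => x m k) (y k)) -> Un_cv (fun m => l1norm (x m)) (l1norm y).
Proof. intros Hx; apply Un_cv_lsum; intros k _; apply cv_cvabs, Hx. Qed.

End Coordinates.

Section Norm.
Variables (n : nat) (N : vec n -> R).
Hypothesis HN : is_norm N.

Lemma norm_nonneg (u : vec n) : 0 <= N u.
Proof. apply HN. Qed.

Lemma norm_scal (c : R) (u : vec n) : N (vscale c u) = Rabs c * N u.
Proof. apply HN. Qed.

Lemma norm_triangle (u v : vec n) : N (vadd u v) <= N u + N v.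
Proof. apply HN. Qed.

Lemma norm_eq0 (u : vec n) : N u = 0 -> u = vzero.
Proof. apply HN. Qed.

Lemma norm_vzero : N vzero = 0.
Proof.
  replace (@vzero n) with (vscale 0 (@vzero n)) by vec_ring.
  rewrite norm_scal, Rabs_R0; ring.
Qed.

Lemma norm_vsub_sym (u v : vec n) : N (vsub u v) = N (vsub v u).
Proof.
  replace (vsub u v) with (vscale (- (1)) (vsub v u)) by vec_ring.
  rewrite norm_scal, Rabs_Ropp, Rabs_R1; ring.
Qed.

Lemma norm_vsub_triangle (u v w : vec n) : N (vsub u w) <= N (vsub u v) + N (vsub v w).
Proof. replace (vsub u w) with (vadd (vsub u v) (vsub v w)) by vec_ring; apply norm_triangle. Qed.

Lemma norm_vsub_eq0 (u v : vec n) : N (vsub u v) = 0 -> u = v.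
Proof.
  intros Huv; apply norm_eq0 in Huv; apply functional_extensionality; intro i.
  apply Rminus_diag_uniq; exact (f_equal (fun w => w i) Huv).
Qed.

Lemma Rabs_norm_minus_le (u v : vec n) : Rabs (N u - N v) <= N (vsub u v).
Proof.
  pose proof (norm_vsub_triangle u v vzero) as Hu.
  pose proof (norm_vsub_triangle v u vzero) as Hv.
  replace (vsub u vzero) with u in * by vec_ring; replace (vsub v vzero) with v in * by vec_ring.
  rewrite (norm_vsub_sym v u) in Hv; apply Rabs_le; lra.
Qed.

Lemma norm_le_coord_sum (u : vec n) :
  N u <= lsum (fin_enum n) (fun k => Rabs (u k) * N (basis n k)).
Proof.
  generalize (supported_on_fin_enum n u); generalize (fin_enum n); intros l.
  revert u; induction l as [|k l IH]; intros u Hu; simpl.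
  - rewrite (supported_on_nil n u Hu), norm_vzero; lra.
  - rewrite (vec_split_coord n k u) at 1.
    eapply Rle_trans; [apply norm_triangle|]; rewrite norm_scal.
    apply Rplus_le_compat_l; eapply Rle_trans; [exact (IH _ (supported_on_cons n k l u Hu))|].
    apply lsum_le; intro i; apply Rmult_le_compat_r; [apply norm_nonneg|].
    unfold zero_coord; destruct (Fin.eq_dec k i); [rewrite Rabs_R0; apply Rabs_pos | lra].
Qed.

Lemma coord_cv_norm (x : nat -> vec n) (y : vec n) :
  (forall k, Un_cv (fun m => x m k) (y k)) ->
  forall eps, 0 < eps -> eventually (fun m => N (vsub (x m) y) < eps).
Proof.
  intros Hx eps Heps.
  assert (Hsum : Un_cv (fun m => lsum (fin_enum n) (fun k => Rabs (x m k - y k) * N (basis n k))) 0).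
  { rewrite <- (lsum_zero (fin_enum n)).
    apply (Un_cv_lsum _ (fun k m => Rabs (x m k - y k) * N (basis n k))); intros k _.
    replace 0 with (Rabs (y k - y k) * N (basis n k)) by (rewrite Rminus_diag, Rabs_R0; ring).
    apply CV_mult; [apply cv_cvabs, CV_minus; [apply Hx | apply Un_cv_const] | apply Un_cv_const]. }
  apply (filter_imp _ _ (fun m Hm => Rle_lt_trans _ _ _ (norm_le_coord_sum (vsub (x m) y)) Hm)).
  exact (Un_cv_0_eventually_lt _ Hsum eps Heps).
Qed.

Lemma l1norm_le_norm : exists c, 0 < c /\ forall u, c * l1norm n u <= N u.
Proof.
  apply NNPP; intros Hno.
  assert (Hsmall : forall m, exists y, l1norm n y = 1 /\ N y < / INR (S m)).
  { intro m; apply NNPP; intros Hy; apply Hno.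
    exists (/ INR (S m)); split; [apply Rinv_0_lt_compat, lt_0_INR; lia|].
    intro u; apply Rnot_lt_le; intros Hu.
    assert (Hpos : 0 < l1norm n u).
    { destruct (Req_dec (l1norm n u) 0) as [H0|H0];
        [rewrite H0 in Hu; pose proof (norm_nonneg u); lra|].
      pose proof (lsum_nonneg (fin_enum n) (fun k => Rabs (u k)) (fun k => Rabs_pos _)).
      unfold l1norm in *; lra. }
    apply Hy; exists (vscale (/ l1norm n u) u).
    rewrite l1norm_scal, norm_scal, Rabs_pos_eq by (left; apply Rinv_0_lt_compat, Hpos).
    split; [field; lra|].
    apply (Rmult_lt_reg_l (l1norm n u)); [exact Hpos|].
    rewrite <- Rmult_assoc, Rinv_r, Rmult_1_l by lra; lra. }
  destruct (choice _ Hsmall) as [y Hy].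
  destruct (bounded_family_subseq_cv (fin_enum n) (fun k m => y m k)) as [phi [Hphi Hcv]].
  { intros k _; exists 1; intro m; rewrite <- (proj1 (Hy m)); apply coord_le_l1norm. }
  destruct (choice (fun k L => Un_cv (fun m => y (phi m) k) L)) as [z Hz].
  { intro k; apply Hcv, fin_enum_complete. }
  assert (Hz1 : l1norm n z = 1).
  { apply (UL_sequence (fun m => l1norm n (y (phi m)))); [apply Un_cv_l1norm, Hz|].
    apply (Un_cv_ext (fun _ => 1)); [intro m; symmetry; apply Hy | apply Un_cv_const]. }
  assert (Hz0 : N z = 0).
  { apply Rle_eps_eq0; [apply norm_nonneg|]; intros eps Heps.
    assert (Heps2 : 0 < eps / 2) by lra.
    destruct (filter_ex _ (filter_and _ _ (coord_cv_norm (fun m => y (phi m)) z Hz _ Heps2)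
      (eventually_comp_subseq phi _ Hphi (eventually_inv_succ_lt _ Heps2))))
      as [m [Hm1 Hm2]].
    pose proof (norm_vsub_triangle z (y (phi m)) vzero) as Htri.
    replace (vsub z vzero) with z in Htri by vec_ring.
    replace (vsub (y (phi m)) vzero) with (y (phi m)) in Htri by vec_ring.
    rewrite norm_vsub_sym in Htri; pose proof (proj2 (Hy (phi m))); lra. }
  apply norm_eq0 in Hz0; rewrite Hz0, l1norm_vzero in Hz1; lra.
Qed.

Lemma coord_le_norm : exists C, forall u k, Rabs (u k) <= C * N u.
Proof.
  destruct l1norm_le_norm as [c [Hc Hle]]; exists (/ c); intros u k.
  apply (Rmult_le_reg_l c); [exact Hc|]; rewrite <- Rmult_assoc, Rinv_r, Rmult_1_l by lra.
  eapply Rle_trans; [|apply Hle]; apply Rmult_le_compat_l; [lra | apply coord_le_l1norm].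
Qed.

End Norm.

Section Orthogonal.
Variables (n : nat) (N : vec n -> R).
Hypothesis HN : is_norm N.

Lemma in_O_id : in_O N (fun u => u).
Proof. split; [split|]; reflexivity. Qed.

Lemma in_O_comp (f g : vec n -> vec n) : in_O N f -> in_O N g -> in_O N (fun u => f (g u)).
Proof.
  intros [[Af Sf] Nf] [[Ag Sg] Ng]; split; [split|].
  - intros u v; rewrite Ag, Af; reflexivity.
  - intros c u; rewrite Sg, Sf; reflexivity.
  - intro u; rewrite Nf, Ng; reflexivity.
Qed.

Lemma linear_vzero (f : vec n -> vec n) : is_linear f -> f vzero = vzero.
Proof.
  intros [_ Sf]; replace (@vzero n) with (vscale 0 (@vzero n)) by vec_ring.
  rewrite Sf; vec_ring.
Qed.

Lemma linear_vsub (f : vec n -> vec n) (u v : vec n) :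
  is_linear f -> f (vsub u v) = vsub (f u) (f v).
Proof.
  intros [Af Sf]; replace (vsub u v) with (vadd u (vscale (- (1)) v)) by vec_ring.
  rewrite Af, Sf; vec_ring.
Qed.

Lemma in_O_dist (f : vec n -> vec n) (u v : vec n) :
  in_O N f -> N (vsub (f u) (f v)) = N (vsub u v).
Proof. intros [Lf Nf]; rewrite <- linear_vsub by exact Lf; apply Nf. Qed.

Lemma in_O_iter (g : vec n -> vec n) (k : nat) : in_O N g -> in_O N (Nat.iter k g).
Proof. intros Hg; induction k; [apply in_O_id | exact (in_O_comp g _ Hg IHk)]. Qed.

Definition pointwise_cv (a : nat -> vec n -> vec n) (g : vec n -> vec n) : Prop :=
  forall u eps, 0 < eps -> eventually (fun m => N (vsub (a m u) (g u)) < eps).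

Lemma linear_coord_cv (a : nat -> vec n -> vec n) :
  (forall m, is_linear (a m)) ->
  (forall j k, exists L, Un_cv (fun m => a m (basis n j) k) L) ->
  forall u k, exists L, Un_cv (fun m => a m u k) L.
Proof.
  intros Ha Hbasis u; generalize (supported_on_fin_enum n u); generalize (fin_enum n).
  intros l; revert u; induction l as [|j l IH]; intros u Hu k.
  - rewrite (supported_on_nil n u Hu); exists 0.
    apply (Un_cv_ext (fun _ => 0)); [|apply Un_cv_const].
    intro m; rewrite (linear_vzero _ (Ha m)); reflexivity.
  - destruct (IH _ (supported_on_cons n j l u Hu) k) as [L1 HL1].
    destruct (Hbasis j k) as [L2 HL2].
    exists (u j * L2 + L1).
    apply (Un_cv_ext (fun m => u j * a m (basis n j) k + a m (zero_coord n j u) k)).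
    + intro m; rewrite (vec_split_coord n j u) at 3.
      destruct (Ha m) as [Am Sm]; rewrite Am, Sm; reflexivity.
    + apply CV_plus; [apply CV_mult; [apply Un_cv_const | exact HL2] | exact HL1].
Qed.

Lemma coord_limit_in_O (a : nat -> vec n -> vec n) (g : vec n -> vec n) :
  (forall m, in_O N (a m)) -> (forall u k, Un_cv (fun m => a m u k) (g u k)) ->
  in_O N g /\ pointwise_cv a g.
Proof.
  intros Ha Hg.
  assert (Hcv : pointwise_cv a g) by (intro u; apply (coord_cv_norm n N HN), Hg).
  split; [split; [split|]|exact Hcv].
  - intros u v; apply functional_extensionality; intro k.
    apply (UL_sequence (fun m => a m (vadd u v) k)); [apply Hg|].
    apply (Un_cv_ext (fun m => a m u k + a m v k)); [|apply CV_plus; apply Hg].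
    intro m; destruct (Ha m) as [[Am _] _]; rewrite Am; reflexivity.
  - intros c u; apply functional_extensionality; intro k.
    apply (UL_sequence (fun m => a m (vscale c u) k)); [apply Hg|].
    apply (Un_cv_ext (fun m => c * a m u k)); [|apply CV_mult; [apply Un_cv_const | apply Hg]].
    intro m; destruct (Ha m) as [[_ Sm] _]; rewrite Sm; reflexivity.
  - intro u; apply (UL_sequence (fun m => N (a m u))).
    + intros eps Heps; change (eventually (fun m => Rabs (N (a m u) - N (g u)) < eps)).
      apply (filter_imp _ _ (fun m Hm => Rle_lt_trans _ _ _
        (Rabs_norm_minus_le n N HN _ _) Hm)); exact (Hcv u eps Heps).
    + apply (Un_cv_ext (fun _ => N u)); [intro m; symmetry; apply Ha | apply Un_cv_const].
Qed.

Lemma in_O_seq_compact (a : nat -> vec n -> vec n) : (forall m, in_O N (a m)) ->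
  exists phi g, (forall m, (phi m < phi (S m))%nat) /\ in_O N g /\
    pointwise_cv (fun m => a (phi m)) g.
Proof.
  intros Ha; destruct (coord_le_norm n N HN) as [C HC].
  destruct (bounded_family_subseq_cv (list_prod (fin_enum n) (fin_enum n))
              (fun jk m => a m (basis n (fst jk)) (snd jk))) as [phi [Hphi Hbasis]].
  { intros [j k] _; exists (C * N (basis n j)); intro m.
    rewrite <- (proj2 (Ha m)); apply HC. }
  destruct (choice (fun (uk : vec n * Fin.t n) L => Un_cv (fun m => a (phi m) (fst uk) (snd uk)) L))
    as [g Hg].
  { intros [u k]; apply (linear_coord_cv (fun m => a (phi m))); [intro m; apply Ha|].
    intros j k'; apply (Hbasis (j, k')), in_prod; apply fin_enum_complete. }
  destruct (coord_limit_in_O (fun m => a (phi m)) (fun u k => g (u, k))) as [Og Hcv].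
  { intro m; apply Ha. }
  { intros u k; exact (Hg (u, k)). }
  exists phi, (fun u k => g (u, k)); auto.
Qed.

Lemma in_O_powers_near_id (g : vec n -> vec n) : in_O N g ->
  exists k : nat -> nat, pointwise_cv (fun m => Nat.iter (S (k m)) g) (fun u => u).
Proof.
  intros Hg; pose proof (fun k => in_O_iter g k Hg) as Hpw.
  destruct (in_O_seq_compact (fun k => Nat.iter k g) Hpw) as [phi [g0 [Hphi [_ Hcv]]]].
  exists (fun m => (phi (S m) - phi m - 1)%nat); intros w eps Heps.
  assert (Heps2 : 0 < eps / 2) by lra.
  apply (filter_imp (fun m => N (vsub (Nat.iter (phi (S m)) g w) (g0 w)) < eps / 2 /\
                              N (vsub (Nat.iter (phi m) g w) (g0 w)) < eps / 2)).
  - intros m [Hnext Hcur].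
    rewrite <- (in_O_dist _ _ _ (Hpw (phi m))), <- Nat.iter_add.
    replace (phi m + S (phi (S m) - phi m - 1))%nat with (phi (S m)) by (specialize (Hphi m); lia).
    pose proof (norm_vsub_triangle n N HN (Nat.iter (phi (S m)) g w) (g0 w) (Nat.iter (phi m) g w)).
    rewrite (norm_vsub_sym n N HN (g0 w)) in *; lra.
  - apply filter_and; [|exact (Hcv w _ Heps2)].
    exact (eventually_comp_subseq S _ (fun m => Nat.lt_succ_diag_r (S m)) (Hcv w _ Heps2)).
Qed.

Lemma in_O_inverse (g : vec n -> vec n) : in_O N g ->
  exists h, in_O N h /\ inverse_maps g h.
Proof.
  intros Hg; destruct (in_O_powers_near_id g Hg) as [k Hk].
  destruct (in_O_seq_compact _ (fun m => in_O_iter g (k m) Hg)) as [psi [h [Hpsi [Oh Hh]]]].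
  assert (Hgh : forall u, g (h u) = u).
  { intro u; apply (norm_vsub_eq0 n N HN), Rle_eps_eq0; [apply norm_nonneg, HN|].
    intros eps Heps; assert (Heps2 : 0 < eps / 2) by lra.
    destruct (filter_ex _ (filter_and _ _ (Hh u _ Heps2)
      (eventually_comp_subseq psi _ Hpsi (Hk u _ Heps2)))) as [m [Hm1 Hm2]].
    pose proof (norm_vsub_triangle n N HN (g (h u)) (g (Nat.iter (k (psi m)) g u)) u) as Htri.
    rewrite (in_O_dist g _ _ Hg), (norm_vsub_sym n N HN (h u)) in Htri; simpl in Hm2; lra. }
  exists h; split; [exact Oh | split; [exact Hgh|]].
  intro u; apply (norm_vsub_eq0 n N HN).
  rewrite <- (in_O_dist g _ _ Hg), Hgh, (in_O_dist g _ _ Hg).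
  replace (vsub u u) with (@vzero n) by vec_ring; apply (norm_vzero n N HN).
Qed.

End Orthogonal.

Lemma infimum_approx (S : R -> Prop) (m eps : R) :
  is_infimum S m -> 0 < eps -> exists x, S x /\ x < m + eps.
Proof.
  intros [_ Hglb] Heps; apply NNPP; intros Hno.
  assert (m + eps <= m); [|lra].
  apply Hglb; intros x Hx; apply Rnot_lt_le; intros Hlt; apply Hno; exists x; auto.
Qed.

Lemma sqrt_sum_sq_le (x y : R) : 0 <= x -> 0 <= y -> sqrt (x ^ 2 + y ^ 2) <= x + y.
Proof. intros Hx Hy; rewrite <- (sqrt_pow2 (x + y)) by lra; apply sqrt_le_1_alt; nra. Qed.

Lemma le_sqrt_sum_sq (x y : R) : 0 <= x -> 0 <= y -> x <= sqrt (x ^ 2 + y ^ 2) /\ y <= sqrt (x ^ 2 + y ^ 2).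
Proof.
  intros Hx Hy; pose proof (proj1 (sqrt_plus_sqr x y)) as Hmax.
  rewrite !Rabs_pos_eq in Hmax by assumption.
  split; eapply Rle_trans; [apply Rmax_l | exact Hmax | apply Rmax_r | exact Hmax].
Qed.

Lemma compact_VV_singleton (n : nat) (N : vec n -> R) (u v : vec n) :
  compact_VV N (fun x y => x = u /\ y = v).
Proof.
  intros I U _ Hcover; destruct (Hcover u v (conj eq_refl eq_refl)) as [i Hi].
  exists (i :: nil); intros x y [-> ->]; exists i; split; [left; reflexivity | exact Hi].
Qed.

Section WaneGroup.
Variables (n : nat) (N : vec n -> R) (H : (vec n -> vec n) -> Prop)
  (L : nat -> (vec n -> vec n) -> R) (d : nat -> vec n -> vec n -> R)
  (dinf : vec n -> vec n -> R).
Hypothesis HN : is_norm N.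
Hypothesis HH : is_subgroup_O N H.
Hypothesis HL : forall i, is_group_norm H (L i).
Hypothesis Hd : forall i u v, is_infimum
  (fun r => exists a, H a /\ r = sqrt (L i a ^ 2 + N (vsub (a u) v) ^ 2)) (d i u v).
Hypothesis Hcv : unif_cv_compact N d dinf.
Hypothesis Hdinf : is_semimetric dinf.

Definition wane_group (g : vec n -> vec n) : Prop :=
  in_O N g /\ forall u, dinf u (g u) = 0.

Lemma d_cv_pointwise (u v : vec n) (eps : R) :
  0 < eps -> eventually (fun i => Rabs (d i u v - dinf u v) < eps).
Proof.
  intros Heps; destruct (Hcv _ (compact_VV_singleton n N u v) eps Heps) as [i0 Hi0].
  exists i0; intros i Hi; exact (Hi0 i Hi u v (conj eq_refl eq_refl)).
Qed.

Lemma d_le_group_norm (i : nat) (a : vec n -> vec n) (u v : vec n) :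
  H a -> d i u v <= L i a + N (vsub (a u) v).
Proof.
  intros Ha; eapply Rle_trans; [apply (proj1 (Hd i u v)); exists a; split; [exact Ha | reflexivity]|].
  apply sqrt_sum_sq_le; [apply (HL i), Ha | apply (norm_nonneg n N HN)].
Qed.

Lemma dinf_lt_eventually (u v : vec n) (eps : R) : 0 < eps ->
  eventually (fun i => forall a, H a -> dinf u v < L i a + N (vsub (a u) v) + eps).
Proof.
  intros Heps; refine (filter_imp _ _ _ (d_cv_pointwise u v eps Heps)).
  intros i Hi a Ha; pose proof (d_le_group_norm i a u v Ha).
  apply Rabs_def2 in Hi; lra.
Qed.

Lemma dinf_le_norm (u v : vec n) : dinf u v <= N (vsub u v).
Proof.
  apply le_epsilon; intros eps Heps.
  destruct (filter_ex _ (dinf_lt_eventually u v eps Heps)) as [i Hi].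
  destruct HH as [_ [Hid _]]; specialize (Hi _ Hid).
  rewrite (proj2 (proj1 (proj2 (HL i)) _ Hid) (fun _ => eq_refl)) in Hi; lra.
Qed.

Lemma dinf_zero_near_minimizers (u v : vec n) : dinf u v = 0 ->
  exists a : nat -> vec n -> vec n, (forall i, H (a i)) /\
    forall eps, 0 < eps -> eventually (fun i => L i (a i) < eps /\ N (vsub (a i u) v) < eps).
Proof.
  intros Huv.
  assert (Happrox : forall i, exists a, H a /\
            sqrt (L i a ^ 2 + N (vsub (a u) v) ^ 2) < d i u v + / INR (S i)).
  { intro i; destruct (infimum_approx _ _ (/ INR (S i)) (Hd i u v)) as [r [[a [Ha ->]] Hr]].
    - apply Rinv_0_lt_compat, lt_0_INR; lia.
    - exists a; auto. }
  destruct (choice _ Happrox) as [a Ha]; exists a; split; [intro i; apply Ha|].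
  intros eps Heps; assert (Heps2 : 0 < eps / 2) by lra.
  refine (filter_imp _ _ _ (filter_and _ _ (d_cv_pointwise u v _ Heps2)
                                          (eventually_inv_succ_lt _ Heps2))).
  intros i [Hdi Hinv]; rewrite Huv, Rminus_0_r in Hdi; apply Rabs_def2 in Hdi.
  destruct (Ha i) as [Hai Hlt].
  destruct (le_sqrt_sum_sq (L i (a i)) (N (vsub (a i u) v)));
    [apply (HL i), Hai | apply (norm_nonneg n N HN) | lra].
Qed.

Lemma wane_group_id : wane_group (fun u => u).
Proof. split; [apply in_O_id | intro u; apply Hdinf]. Qed.

Lemma wane_group_comp (g h : vec n -> vec n) :
  wane_group g -> wane_group h -> wane_group (fun u => g (h u)).
Proof.
  intros [Og Dg] [Oh Dh]; split; [exact (in_O_comp n N g h Og Oh)|].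
  intro u; apply Rle_antisym; [|apply Hdinf].
  pose proof (proj2 (proj2 (proj2 Hdinf)) u (h u) (g (h u))); rewrite Dh, Dg in *; lra.
Qed.

Lemma wane_group_inv (g : vec n -> vec n) :
  wane_group g -> exists h, wane_group h /\ inverse_maps g h.
Proof.
  intros [Og Dg]; destruct (in_O_inverse n N HN g Og) as [h [Oh [Hgh Hhg]]].
  exists h; split; [split; [exact Oh|] | split; assumption].
  intro u; rewrite <- (Hgh u) at 1; rewrite (proj1 (proj2 (proj2 Hdinf))); apply Dg.
Qed.

Lemma wane_group_closed (gs : nat -> vec n -> vec n) (g : vec n -> vec n) :
  (forall k, wane_group (gs k)) -> in_O N g -> pointwise_cv n N gs g -> wane_group g.
Proof.
  intros Hgs Og Hcvg; split; [exact Og|]; intro u.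
  apply Rle_eps_eq0; [apply Hdinf|]; intros eps Heps.
  destruct (filter_ex _ (Hcvg u eps Heps)) as [k Hk].
  pose proof (proj2 (proj2 (proj2 Hdinf)) u (gs k u) (g u)).
  pose proof (dinf_le_norm (gs k u) (g u)); rewrite (proj2 (Hgs k)) in *; lra.
Qed.

Lemma wane_group_of_near_minimizers (a : nat -> vec n -> vec n) (g : vec n -> vec n) (phi : nat -> nat) :
  (forall i, H (a i)) -> (forall m, (phi m < phi (S m))%nat) ->
  (forall eps, 0 < eps -> eventually (fun i => L i (a i) < eps)) ->
  in_O N g -> pointwise_cv n N (fun m => a (phi m)) g -> wane_group g.
Proof.
  intros Ha Hphi HLa Og Hag; split; [exact Og|]; intro w.
  apply Rle_eps_eq0; [apply Hdinf|]; intros eps Heps; assert (Heps3 : 0 < eps / 3) by lra.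
  destruct (filter_ex _ (filter_and _ _
    (eventually_comp_subseq phi _ Hphi (dinf_lt_eventually w (g w) _ Heps3))
    (filter_and _ _ (eventually_comp_subseq phi _ Hphi (HLa _ Heps3)) (Hag w _ Heps3))))
    as [m [Hm1 [Hm2 Hm3]]].
  specialize (Hm1 _ (Ha (phi m))); lra.
Qed.

Lemma dinf_zero_iff_orbit (u v : vec n) :
  dinf u v = 0 <-> exists g, wane_group g /\ v = g u.
Proof.
  split; [|intros [g [[_ Dg] ->]]; apply Dg].
  intros Huv; destruct (dinf_zero_near_minimizers u v Huv) as [a [Ha Hmin]].
  destruct (in_O_seq_compact n N HN a (fun i => proj1 HH _ (Ha i))) as [phi [g [Hphi [Og Hag]]]].
  exists g; split.
  - apply (wane_group_of_near_minimizers a g phi Ha Hphi); auto.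
    intros eps Heps; exact (filter_imp _ _ (fun i Hi => proj1 Hi) (Hmin eps Heps)).
  - apply (norm_vsub_eq0 n N HN), Rle_eps_eq0; [apply (norm_nonneg n N HN)|].
    intros eps Heps; assert (Heps2 : 0 < eps / 2) by lra.
    destruct (filter_ex _ (filter_and _ _ (Hag u _ Heps2)
      (eventually_comp_subseq phi _ Hphi (Hmin _ Heps2)))) as [m [Hm1 [_ Hm2]]].
    pose proof (norm_vsub_triangle n N HN v (a (phi m) u) (g u)) as Htri.
    rewrite (norm_vsub_sym n N HN v (a (phi m) u)) in Htri; lra.
Qed.

End WaneGroup.

Theorem mainTheorem14 (n : nat) (N : vec n -> R)
  (H : (vec n -> vec n) -> Prop)
  (L : nat -> (vec n -> vec n) -> R)
  (d : nat -> vec n -> vec n -> R)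
  (dinf : vec n -> vec n -> R) :
  is_norm N ->
  is_subgroup_O N H ->
  (forall i, is_group_norm H (L i)) ->
  (forall i u v, is_infimum
      (fun r => exists a, H a /\ r = sqrt (L i a ^ 2 + N (vsub (a u) v) ^ 2))
      (d i u v)) ->
  unif_cv_compact N d dinf ->
  is_semimetric dinf ->
  let G := fun g => in_O N g /\ forall u, dinf u (g u) = 0 in
  (G (fun u => u) /\
   (forall g h, G g -> G h -> G (fun u => g (h u))) /\
   (forall g, G g -> exists h, G h /\ inverse_maps g h)) /\
  (forall (gs : nat -> vec n -> vec n) (g : vec n -> vec n),
     (forall k, G (gs k)) -> in_O N g ->
     (forall u eps, 0 < eps -> exists k0 : nat, forall k, (k0 <= k)%nat ->
        N (vsub (gs k u) (g u)) < eps) ->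
     G g) /\
  (forall u v, dinf u v = 0 <-> exists g, G g /\ v = g u).
Proof.
  intros HN HH HL Hd Hcv Hdinf G.
  split; [split; [|split] | split].
  - exact (wane_group_id n N dinf Hdinf).
  - exact (wane_group_comp n N dinf Hdinf).
  - exact (wane_group_inv n N dinf HN Hdinf).
  - exact (wane_group_closed n N H L d dinf HN HH HL Hd Hcv Hdinf).
  - exact (dinf_zero_iff_orbit n N H L d dinf HN HH HL Hd Hcv Hdinf).
Qed.
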